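(* Let $n\ge 1$ and let $a_1,\dots,a_n$ be nonnegative integers. Then, as Laurent polynomials in $z_1,\dots,z_n$, $$\mathop{\mathrm{CT}}_{\mathbf z}\frac{(z_1+\cdots+z_n)^{a_1+\cdots+a_n}}{z_1^{a_1}\cdots z_n^{a_n}}\prod_{1\le i\ne j\le n}\left(1-\frac{z_i}{z_j}\right)^{a_j}=\frac{(a_1+a_2+\cdots+a_n)!}{a_1!\,a_2!\cdots a_n!},$$ where $\mathop{\mathrm{CT}}_{\mathbf z}$ denotes the coefficient of $z_1^0\cdots z_n^0$. *)

From HB Require Import structures.
From mathcomp Require Import all_boot all_order all_algebra.
From mathcomp Require Import fraction.
From mathcomp.multinomials Require Import mpoly.
Set Implicit Arguments. Unset Strict Implicit. Unset Printing Implicit Defensive.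
Import Order.TTheory GRing.Theory Num.Theory.
Local Open Scope ring_scope.

(* Laurent polynomials in z_1..z_n with integer coefficients are viewed
   inside the field of fractions of Z[z_1..z_n]. *)
Notation ratfun n := {fraction {mpoly int[n]}}.

Definition tofracp (n : nat) (p : {mpoly int[n]}) : ratfun n :=
  @FracField.tofrac _ p.

Definition zvar (n : nat) (i : 'I_n) : ratfun n := tofracp ('X_i : {mpoly int[n]}).

(* [laurent_CT f c]: f is a Laurent polynomial (f = P / z^m with P a
   polynomial and z^m a monomial) and its constant term (coefficient of
   z_1^0 ... z_n^0) is c, i.e. the coefficient of z^m in P is c.
   (This is independent of the chosen representation.) *)
Definition laurent_CT (n : nat) (f : ratfun n) (c : int) : Prop :=
  exists (P : {mpoly int[n]}) (m : 'X_{1..n}),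
    f = tofracp P / tofracp ('X_[m] : {mpoly int[n]}) /\ P@_m = c.

(* Write the Laurent polynomial over the variables in S as P_S(a) / z^(|S| a), where
   P_S(a) = (sum_(i in S) z_i)^|a| * prod_(j in S) prod_(i in S, i <> j) (z_j - z_i)^(a_j);
   its constant term c_S(a) is then the coefficient of z^(|S| a) in P_S(a).
   Lagrange interpolation of X^|S| at the nodes z_i gives
   sum_j z_j^|S| / prod_(i <> j) (z_j - z_i) = sum_j z_j, hence
   P_S(a) = sum_j z_j^|S| P_S(a - e_j) when all a_j > 0, i.e. c_S(a) = sum_j c_S(a - e_j).
   If a_j = 0, then P_S(a) = z^a P_(S \ j)(a) modulo z_j, so c_S(a) = c_(S \ j)(a).
   These are the recurrence and boundary values of the multinomial coefficients. *)

From HB Require Import structures.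
From mathcomp Require Import all_boot all_order all_algebra.
From mathcomp Require Import fraction.
From mathcomp.multinomials Require Import mpoly.
From mathcomp Require Import ring.

Set Implicit Arguments.
Unset Strict Implicit.
Unset Printing Implicit Defensive.

Import Order.TTheory GRing.Theory Num.Theory.
Local Open Scope ring_scope.

Section LagrangeInterpolation.
Variables (F : fieldType) (I : finType) (A : {set I}) (x : I -> F).
Hypothesis x_inj : {in A &, injective x}.

Definition node_poly (B : {set I}) : {poly F} := \prod_(i in B) ('X - (x i)%:P).

Definition node_weight (j : I) : F := \prod_(i in A :\ j) (x j - x i).

Lemma node_polyE (B : {set I}) :
  node_poly B = \prod_(p <- [seq x i | i <- enum B]) ('X - p%:P).
Proof. by rewrite big_map big_enum. Qed.

Lemma size_node_poly B : size (node_poly B) = #|B|.+1.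
Proof. by rewrite node_polyE size_prod_XsubC size_map -cardE. Qed.

Lemma node_poly_monic B : node_poly B \is monic.
Proof. exact: monic_prod_XsubC. Qed.

Lemma horner_node_poly (B : {set I}) j : j \in B -> (node_poly B).[x j] = 0.
Proof. by move=> jB; rewrite horner_prod (bigD1 j) //= hornerXsubC subrr mul0r. Qed.

Lemma horner_node_poly_D1 j : (node_poly (A :\ j)).[x j] = node_weight j.
Proof. by rewrite horner_prod; apply: eq_bigr => i _; rewrite hornerXsubC. Qed.

Lemma node_weight_neq0 j : j \in A -> node_weight j != 0.
Proof.
move=> jA; apply/prodf_neq0 => i; rewrite in_setD1 => /andP [ij iA].
by rewrite subr_eq0; apply: contra ij => /eqP/x_inj ->.
Qed.

Lemma lagrange_interpolation (p : {poly F}) : (size p <= #|A|)%N ->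
  p = \sum_(j in A) (p.[x j] / node_weight j) *: node_poly (A :\ j).
Proof.
move=> size_p; apply/eqP; rewrite -subr_eq0; apply/eqP.
apply: (@roots_geq_poly_eq0 _ _ [seq x i | i <- enum A]).
- apply/allP => y /mapP [l + ->]; rewrite mem_enum => lA.
  rewrite rootE !hornerE horner_sum (bigD1 l) //= big1 => [|j /andP [jA jl]].
    by rewrite hornerZ horner_node_poly_D1 divfK ?node_weight_neq0 // addr0 subrr.
  by rewrite hornerZ horner_node_poly ?mulr0 // !inE eq_sym jl.
- by rewrite map_inj_in_uniq ?enum_uniq // => i j; rewrite !mem_enum; apply: x_inj.
rewrite size_map -cardE; apply: leq_trans (size_polyD _ _) _.
rewrite geq_max size_p size_polyN; apply: leq_trans (size_sum _ _ _) _.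
apply/bigmax_leqP => j jA; apply: leq_trans (size_scale_leq _ _) _.
by rewrite size_node_poly (cardsD1 j A) jA.
Qed.

Lemma coef_node_poly_card B : (node_poly B)`_#|B| = 1.
Proof. by have /monicP := node_poly_monic B; rewrite lead_coefE size_node_poly. Qed.

Lemma sum_pow_card_div_node_weight :
  \sum_(j in A) x j ^+ #|A| / node_weight j = \sum_(j in A) x j.
Proof.
have [A0 | [j0 j0A]] := set_0Vmem A; first by rewrite A0 !big_set0.
have [k cardA] : {k | #|A| = k.+1} by exists #|A :\ j0|; rewrite (cardsD1 j0 A) j0A.
set p := 'X^#|A| - node_poly A.
have size_p : (size p <= #|A|)%N.
  apply/leq_sizeP => i; rewrite leq_eqVlt => /predU1P [<-|ltAi].
    by rewrite coefB coefXn eqxx coef_node_poly_card subrr.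
  by rewrite coefB coefXn gtn_eqF // nth_default ?size_node_poly // subrr.
have := congr1 (fun q : {poly F} => q`_k) (lagrange_interpolation size_p).
have coef_k : (node_poly A)`_k = - \sum_(j in A) x j.
  have := @coefPn_prod_XsubC _ [seq x i | i <- enum A].
  by rewrite size_map -cardE cardA -node_polyE big_map big_enum; apply.
rewrite coefB coefXn cardA ltn_eqF // sub0r coef_k opprK coef_sum => ->.
apply: eq_bigr => j jA; rewrite coefZ /p !hornerE horner_node_poly // subr0.
have -> : k = #|A :\ j| by apply/eqP; rewrite -eqSS -cardA (cardsD1 j A) jA.
by rewrite coef_node_poly_card mulr1 (cardsD1 j A) jA.
Qed.
End LagrangeInterpolation.

Section DecAt.
Variable I : finType.

Definition dec_at (a : I -> nat) (j : I) : I -> nat :=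
  fun i => if i == j then (a i).-1 else a i.

Lemma big_dec_at {R : Type} {idx : R} {op : Monoid.com_law idx}
    (F : I -> nat -> R) {S : {set I}} {a j} : j \in S ->
  \big[op/idx]_(i in S) F i (dec_at a j i) = op (F j (a j).-1) (\big[op/idx]_(i in S :\ j) F i (a i)).
Proof.
move=> jS; rewrite (big_setD1 j jS) /dec_at eqxx; congr (op _ _).
by apply: eq_bigr => i; rewrite in_setD1 => /andP [/negbTE ->].
Qed.

Lemma sum_dec_at (S : {set I}) a j : j \in S -> (0 < a j)%N ->
  (\sum_(i in S) dec_at a j i)%N = (\sum_(i in S) a i).-1.
Proof.
move=> jS aj; rewrite (big_dec_at (fun _ k => k : nat)) // (big_setD1 j jS).
by rewrite -(prednK aj).
Qed.

Lemma prod_fact_dec_at (S : {set I}) a j : j \in S -> (0 < a j)%N ->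
  (\prod_(i in S) (a i)`! = a j * \prod_(i in S) (dec_at a j i)`!)%N.
Proof.
move=> jS aj; rewrite (big_dec_at (fun _ k => k`!)) // (big_setD1 j jS).
by rewrite -{1}(prednK aj) factS /= mulnA prednK.
Qed.

End DecAt.

Lemma big_in_setT (R : Type) (idx : R) (op : R -> R -> R) (I : finType) (F : I -> R) :
  \big[op/idx]_(i in [set: I]) F i = \big[op/idx]_i F i.
Proof. by apply: eq_bigl => i; rewrite in_setT. Qed.

Lemma prod_one_sub_ratio (F : fieldType) (I : finType) (z : I -> F) (a : I -> nat) :
    (forall j, z j != 0) ->
  \prod_i \prod_(j | i != j) (1 - z i / z j) ^+ a j
  = \prod_j (\prod_(i | i != j) (z j - z i)) ^+ a j / \prod_j z j ^+ (#|I|.-1 * a j).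
Proof.
move=> z_neq0.
transitivity (\prod_i \prod_j (if i != j then ((z j - z i) / z j) ^+ a j else 1)).
  apply: eq_bigr => i _; rewrite big_mkcond; apply: eq_bigr => j _.
  by case: (i != j) => //; rewrite mulrBl divff.
rewrite exchange_big -prodf_div; apply: eq_bigr => j _.
rewrite -big_mkcond /= prodrXl prodf_div expr_div_n prodr_const.
by rewrite cardC1 -exprM mulnC.
Qed.

HB.instance Definition _ (n : nat) :=
  GRing.RMorphism.copy (@tofracp n) (@FracField.tofrac _).

Lemma tofracp_inj n : injective (@tofracp n).
Proof. by move=> p q /eqP; rewrite tofrac_eq => /eqP. Qed.

Section ConstantTerm.
Variable n : nat.
Local Notation mpoly := {mpoly int[n]}.
Implicit Types (S : {set 'I_n}) (a : 'I_n -> nat) (i j : 'I_n) (p q : mpoly).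

Definition sumX (S : {set 'I_n}) : mpoly := \sum_(i in S) 'X_i.

Definition vdm_factor (S : {set 'I_n}) (j : 'I_n) : mpoly :=
  \prod_(i in S :\ j) ('X_j - 'X_i).

Definition ct_numer (S : {set 'I_n}) (a : 'I_n -> nat) : mpoly :=
  sumX S ^+ (\sum_(i in S) a i)%N * \prod_(j in S) vdm_factor S j ^+ a j.

Definition ct_exp (S : {set 'I_n}) (a : 'I_n -> nat) : 'X_{1..n} :=
  [multinom (if i \in S then #|S| * a i else 0)%N | i < n].

Definition ct_coef (S : {set 'I_n}) (a : 'I_n -> nat) : int :=
  (ct_numer S a)@_(ct_exp S a).

Lemma zvar_inj : injective (@zvar n).
Proof.
move=> i j /tofracp_inj eqX; apply/eqP.
by have := @mcoeffXU n int i i; rewrite eqX mcoeffXU eqxx eq_sym; case: eqP.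
Qed.

Lemma tofrac_ct_numer S a : tofracp (ct_numer S a)
  = (\sum_(i in S) zvar i) ^+ (\sum_(i in S) a i)%N * \prod_(j in S) node_weight S (@zvar n) j ^+ a j.
Proof.
rewrite rmorphM rmorphXn rmorph_sum rmorph_prod; congr (_ * _).
by apply: eq_bigr => j _; rewrite rmorphXn rmorph_prod; under eq_bigr do rewrite rmorphB.
Qed.

Lemma ct_numer_rec S a : S != set0 -> {in S, forall j, 0 < a j}%N ->
  ct_numer S a = \sum_(j in S) 'X_j ^+ #|S| * ct_numer S (dec_at a j).
Proof.
move=> /set0Pn [j0 j0S] a_pos.
have N_gt0 : (0 < \sum_(i in S) a i)%N by rewrite (big_setD1 j0 j0S) addn_gt0 a_pos.
set s := \sum_(i in S) zvar i; set q := node_weight S (@zvar n).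
set Q := \prod_(j in S) q j ^+ a j.
have Q_dec j : j \in S -> \prod_(l in S) q l ^+ dec_at a j l = Q / q j.
  move=> jS; rewrite /Q (big_dec_at (fun l k => q l ^+ k)) // (big_setD1 j jS) /=.
  rewrite -{2}(prednK (a_pos j jS)) exprS mulrAC [q j * _]mulrC mulfK //.
  by apply: node_weight_neq0 jS; apply: in2W zvar_inj.
have term j : j \in S -> tofracp ('X_j ^+ #|S| * ct_numer S (dec_at a j))
    = zvar j ^+ #|S| / q j * (s ^+ (\sum_(i in S) a i)%N.-1 * Q).
  move=> jS; rewrite rmorphM rmorphXn /= tofrac_ct_numer -/s -/q Q_dec //.
  by rewrite sum_dec_at ?a_pos // -/(zvar j); ring.
apply: tofracp_inj; rewrite rmorph_sum (eq_bigr _ term) -mulr_suml tofrac_ct_numer.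
by rewrite (sum_pow_card_div_node_weight (in2W zvar_inj)) mulrA -exprS prednK.
Qed.

Lemma mcoeff_XnM (j : 'I_n) k (p : mpoly) m : ('X_j ^+ k * p)@_(U_(j) *+ k + m) = p@_m.
Proof. by rewrite mpolyXn mulrC mcoeffMX. Qed.

Lemma ct_exp_dec_at S a j : j \in S -> (0 < a j)%N ->
  ct_exp S a = (U_(j) *+ #|S| + ct_exp S (dec_at a j))%MM.
Proof.
move=> jS aj; apply/mnmP => i; rewrite mnmDE mulmnE mnm1E !mnmE /dec_at.
case: (eqVneq j i) => [<-|_]; last by rewrite mul0n.
by rewrite jS mul1n addnC -mulnSr prednK.
Qed.

Lemma ct_coef_rec S a : S != set0 -> {in S, forall j, 0 < a j}%N ->
  ct_coef S a = \sum_(j in S) ct_coef S (dec_at a j).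
Proof.
move=> S0 a_pos; rewrite /ct_coef [in LHS](ct_numer_rec S0 a_pos) raddf_sum /=.
by apply: eq_bigr => j jS; rewrite (ct_exp_dec_at jS (a_pos j jS)) mcoeff_XnM.
Qed.

Definition eqmodX j p q := exists r, p = q + 'X_j * r.

Lemma eqmodX_refl j p : eqmodX j p p.
Proof. by exists 0; rewrite mulr0 addr0. Qed.

Lemma eqmodXM j p q p' q' : eqmodX j p q -> eqmodX j p' q' -> eqmodX j (p * p') (q * q').
Proof. by move=> [r ->] [r' ->]; exists (r * q' + q * r' + 'X_j * r * r'); ring. Qed.

Lemma eqmodX_prod j S (F G : 'I_n -> mpoly) : {in S, forall i, eqmodX j (F i) (G i)} ->
  eqmodX j (\prod_(i in S) F i) (\prod_(i in S) G i).
Proof.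
move=> FG; apply: (big_ind2 (eqmodX j)) => [|p q p' q'|]; first exact: eqmodX_refl.
  exact: eqmodXM.
exact: FG.
Qed.

Lemma eqmodXX j p q k : eqmodX j p q -> eqmodX j (p ^+ k) (q ^+ k).
Proof.
move=> pq; elim: k => [|k IH]; first exact: eqmodX_refl.
by rewrite !exprS; apply: eqmodXM.
Qed.

Lemma mcoeff_eqmodX j p q (m : 'X_{1..n}) : eqmodX j p q -> m j = 0%N -> p@_m = q@_m.
Proof.
move=> [r ->] mj; rewrite mcoeffD [r]mpolyE mulr_sumr raddf_sum big1 ?addr0 // => m' _.
rewrite -scalerAr -mpolyXD /= mcoeffZ mcoeffX.
case: eqP mj => [<- | _ _]; last by rewrite mulr0.
by rewrite mnmDE mnm1E eqxx.
Qed.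

Lemma sumX_D1 S j : j \in S -> sumX S = 'X_j + sumX (S :\ j).
Proof. exact: big_setD1. Qed.

Lemma vdm_factor_D1 S i j : j \in S -> i != j ->
  vdm_factor S i = ('X_i - 'X_j) * vdm_factor (S :\ j) i.
Proof.
move=> jS ij; rewrite /vdm_factor (big_setD1 j) ?in_setD1 1?eq_sym ?ij //.
by rewrite !setDDl setUC.
Qed.

Lemma ct_numer_eqmodX S a j : j \in S -> a j = 0%N ->
  eqmodX j (ct_numer S a) (\prod_(i in S :\ j) 'X_i ^+ a i * ct_numer (S :\ j) a).
Proof.
move=> jS aj.
have sum_a : (\sum_(i in S) a i = \sum_(i in S :\ j) a i)%N by rewrite (big_setD1 j jS) aj.
have prod_vdm : \prod_(i in S) vdm_factor S i ^+ a i = \prod_(i in S :\ j) vdm_factor S i ^+ a i.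
  by rewrite (big_setD1 j jS) /= aj expr0 mul1r.
rewrite /ct_numer sum_a prod_vdm mulrCA -big_split /=; apply: eqmodXM.
  by apply: eqmodXX; exists 1; rewrite mulr1 (sumX_D1 jS) addrC.
apply: eqmodX_prod => i; rewrite in_setD1 => /andP [ij _]; rewrite -exprMn; apply: eqmodXX.
by rewrite (vdm_factor_D1 jS ij); exists (- vdm_factor (S :\ j) i); ring.
Qed.

Lemma ct_coef_drop S a j : j \in S -> a j = 0%N -> ct_coef S a = ct_coef (S :\ j) a.
Proof.
move=> jS aj; set mr : 'X_{1..n} := [multinom (if i \in S :\ j then a i else 0)%N | i < n].
have exp_split : ct_exp S a = (mr + ct_exp (S :\ j) a)%MM.
  apply/mnmP => i; rewrite mnmDE !mnmE in_setD1 (cardsD1 j S) jS.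
  case: (eqVneq i j) => [->|_] /=; first by rewrite aj muln0; case: (_ \in _).
  by case: (i \in S); rewrite ?add1n ?mulSn.
have X_mr : 'X_[mr] = \prod_(i in S :\ j) 'X_i ^+ a i :> mpoly.
  rewrite mpolyXE_id [RHS]big_mkcond /=; apply: eq_bigr => i _.
  by rewrite mnmE; case: (_ \in _).
rewrite /ct_coef (mcoeff_eqmodX (ct_numer_eqmodX jS aj)).
  by rewrite -X_mr exp_split mulrC mcoeffMX.
by rewrite exp_split mnmDE !mnmE setD11.
Qed.

Lemma ct_coef_set0 a : ct_coef set0 a = 1.
Proof.
rewrite /ct_coef.
have -> : ct_exp set0 a = 0%MM by apply/mnmP => i; rewrite mnmE mnm0E inE.
by rewrite /ct_numer !big_set0 expr0 mulr1 mcoeff1 eqxx.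
Qed.

Lemma ct_coef_multinomial S a :
  ct_coef S a * (\prod_(i in S) (a i)`!)%N%:R = (\sum_(i in S) a i)`!%:R.
Proof.
move: {2}(_ + _)%N (leqnn (\sum_(i in S) a i + #|S|)) => k.
elim: k S a => [|k IH] S a.
  rewrite leqn0 addn_eq0 => /andP [_ /eqP /cards0_eq ->].
  by rewrite ct_coef_set0 !big_set0 mul1r.
move=> size_S; have [-> | /set0Pn [j0 j0S]] := eqVneq S set0.
  by rewrite ct_coef_set0 !big_set0 mul1r.
have [/existsP [j /andP [jS /eqP aj]] | ] := boolP [exists j in S, a j == 0%N].
  rewrite (ct_coef_drop jS aj) (big_setD1 j jS) [in RHS](big_setD1 j jS) /= aj.
  rewrite fact0 mul1n /= add0n IH //; move: size_S.
  by rewrite (big_setD1 j jS) (cardsD1 j S) jS /= aj add0n add1n addnS ltnS.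
rewrite negb_exists_in => /forall_inP a_neq0.
have a_pos : {in S, forall j, 0 < a j}%N by move=> j /a_neq0; rewrite lt0n.
have N_gt0 : (0 < \sum_(i in S) a i)%N by rewrite (big_setD1 j0 j0S) addn_gt0 a_pos.
have term j : j \in S -> ct_coef S (dec_at a j) * (\prod_(i in S) (a i)`!)%N%:R
    = (a j * ((\sum_(i in S) a i).-1)`!)%:R.
  move=> jS; rewrite (prod_fact_dec_at jS (a_pos j jS)) natrM mulrCA IH.
    by rewrite sum_dec_at ?a_pos // -natrM.
  by rewrite sum_dec_at ?a_pos //; move: size_S; rewrite -(prednK N_gt0).
rewrite ct_coef_rec ?a_pos //; last by apply/set0Pn; exists j0.
rewrite mulr_suml (eq_bigr _ term) -natr_sum -big_distrl /=.
by rewrite -[in RHS](prednK N_gt0) factS prednK.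
Qed.

Lemma ct_coef_setT a :
  ct_coef [set: 'I_n] a = ((\sum_(i < n) a i)`! %/ \prod_(i < n) (a i)`!)%N.
Proof.
have := ct_coef_multinomial [set: 'I_n] a; rewrite !big_in_setT.
move=> /(congr1 (fun c => (c %/ (\prod_(i < n) (a i)`!)%N%:R)%Z)).
rewrite mulzK ?pnatr_eq0 -?lt0n ?prodn_gt0 // => [->|i]; last exact: fact_gt0.
by rewrite -divz_nat !natz.
Qed.

Lemma zvar_neq0 i : zvar i != 0 :> ratfun n.
Proof.
by apply/eqP => /tofracp_inj X0; have := @mcoeffXU n int i i; rewrite X0 mcoeff0 eqxx.
Qed.

Lemma tofrac_ct_numer_setT a : tofracp (ct_numer [set: 'I_n] a)
  = (\sum_(i < n) zvar i) ^+ (\sum_(i < n) a i)%N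
    * \prod_(j < n) (\prod_(i < n | i != j) (zvar j - zvar i)) ^+ a j.
Proof.
rewrite tofrac_ct_numer !big_in_setT.
congr (_ * _); apply: eq_bigr => j _; congr (_ ^+ _).
by apply: eq_bigl => i; rewrite !inE andbT.
Qed.

Lemma tofrac_ct_exp_setT a :
  tofracp ('X_[ct_exp [set: 'I_n] a] : mpoly) = \prod_(j < n) zvar j ^+ (n * a j).
Proof.
rewrite mpolyXE_id rmorph_prod; apply: eq_bigr => j _.
by rewrite rmorphXn mnmE in_setT cardsT card_ord.
Qed.

End ConstantTerm.

Theorem mainTheorem18 (n : nat) (a : 'I_n -> nat) (hn : (0 < n)%N) :
  laurent_CT
    ((\sum_(i < n) zvar i) ^+ (\sum_(i < n) a i)%N
       / (\prod_(i < n) zvar i ^+ a i)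
       * \prod_(i < n) \prod_(j < n | i != j) (1 - zvar i / zvar j) ^+ a j)
    ((\sum_(i < n) a i)`! %/ (\prod_(i < n) (a i)`!))%N%:Z.
Proof.
exists (ct_numer [set: 'I_n] a), (ct_exp [set: 'I_n] a); split; last exact: ct_coef_setT.
rewrite tofrac_ct_numer_setT tofrac_ct_exp_setT (prod_one_sub_ratio a (@zvar_neq0 n)) card_ord.
have -> : \prod_(j < n) zvar j ^+ (n * a j)
    = \prod_(j < n) zvar j ^+ a j * \prod_(j < n) zvar j ^+ (n.-1 * a j).
  by rewrite -big_split; apply: eq_bigr => j _; rewrite /= -exprD -mulSn prednK.
by rewrite invfM; ring.
Qed.
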